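(* Let $Q=\{q_1,\ldots,q_n\}\subset\mathbb{P}^1$ be distinct points, $\vec g=(g_1,\ldots,g_n)$ effective divisors on $[0,1)$ of common degree $r$, and for each $i$ fix a good arrangement $a_{i,1},\ldots,a_{i,r}$ of $g_i$. Let $k_1,\ldots,k_r\in\mathbb{Z}$, $E^j=[k_j;a_{1,j},\ldots,a_{n,j}]$, $\tau_j=\#\{i: a_{i,j}\ge a_{i,j+1}\}$ and $z_j=k_{j+1}-(\tau_j+k_j+2-n)$, all indices modulo $r$. Then there exist nonzero zero-residue maps $\theta^j:E^j\to E^{j+1}\otimes\Omega^1(\log Q)$ for all $j=1,\ldots,r$ if and only if $z_j\geq0$ for all $j$; in this case $z_j$ is the number of zeros of $\theta^j$ beyond those required by the zero-residue condition. Moreover $z_1+\cdots+z_r=\delta(\vec g)$, so a choice of the $k_j$ with all $z_j\ge 0$ exists if and only if $\delta(\vec g)\geq 0$.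
   Context: $[k;a_1,\ldots,a_n]$ ($k\in\mathbb{Z}$, $a_i\in[0,1)$) is the parabolic line bundle with underlying bundle $\mathcal{O}(k)$ and weight $a_i$ at $q_i$. A zero-residue map $[k;a]\to[k';a']\otimes\Omega^1(\log Q)$ is a holomorphic map $\mathcal{O}(k)\to\mathcal{O}(k'+n-2)$ (using $\Omega^1(\log Q)\cong\mathcal{O}(n-2)$) vanishing at every $q_i$ with $a_i\geq a'_i$ (these are the required zeros). An arrangement of $g_i=\sum m_i(\alpha)[\alpha]$ is a sequence $a_{i,1},\ldots,a_{i,r}$ in $[0,1)$ containing each $\alpha$ exactly $m_i(\alpha)$ times; it is good if $\#\{t: a_{i,t}\ge a_{i,t+1}\}$ (indices mod $r$) is minimal among arrangements. The defect is $\delta(\vec g)=(n-2)r-\sum_i\max_\alpha m_i(\alpha)$. *)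

From HB Require Import structures.
From mathcomp Require Import all_boot all_order all_algebra all_field.
From mathcomp Require Import reals.
Set Implicit Arguments. Unset Strict Implicit. Unset Printing Implicit Defensive.
Import Order.TTheory GRing.Theory Num.Theory.
Local Open Scope ring_scope.

(* Points of P^1(C): [Some x] is the affine point x, [None] is infinity.   *)
Definition P1 := option algC.

(* A global section of O(d) on P^1, written in the affine chart: a         *)
(* polynomial of degree <= d (only 0 if d < 0).  A holomorphic map         *)
(* O(k) -> O(m) is exactly a global section of O(m - k).                   *)
Definition is_section (d : int) (p : {poly algC}) : Prop :=
  ((size p)%:Z <= d + 1)%R.

Definition ordz (d : int) (p : {poly algC}) (x : P1) : nat :=
  match x with
  | Some c => mup c p
  | None => absz (d - ((size p).-1)%:Z)
  end.

Definition vanishes_at (d : int) (p : {poly algC}) (x : P1) : Prop :=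
  match x with
  | Some c => root p c
  | None => ((size p)%:Z <= d)%R
  end.

(* Zero-residue map [k; a] -> [k'; a'] (x) Omega^1(log Q), with
   Omega^1(log Q) = O(n-2): a holomorphic map O(k) -> O(k'+n-2) vanishing at
   every q_i with a_i >= a'_i. *)
Definition zero_residue (R : realType) (n : nat) (Q : 'I_n -> P1)
    (k : int) (a : 'I_n -> R) (k' : int) (a' : 'I_n -> R)
    (theta : {poly algC}) : Prop :=
  is_section (k' + n%:Z - 2 - k) theta /\
  forall i : 'I_n, (a' i <= a i)%R -> vanishes_at (k' + n%:Z - 2 - k) theta (Q i).

(* An arrangement a_{i,1..r} of g_i is encoded as a function 'I_r -> R;  *)
(* the divisor g_i is the multiset of its values.                        *)
Definition arr (R : realType) (r : nat) (s : 'I_r -> R) : seq R :=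
  [seq s t | t <- enum 'I_r].

Definition cdesc (R : realType) (s : seq R) : nat :=
  \sum_(t < size s) (nth 0 s (t.+1 %% size s) <= nth 0 s t)%R.

Definition good (R : realType) (s : seq R) : Prop :=
  forall s' : seq R, perm_eq s s' -> (cdesc s <= cdesc s')%N.

Definition maxmult (R : realType) (s : seq R) : nat :=
  \max_(x <- s) count_mem x s.

Definition defect (R : realType) (n r : nat) (a : 'I_n -> 'I_r -> R) : int :=
  (n%:Z - 2) * r%:Z - (\sum_(i < n) maxmult (arr (a i)))%:Z.

Definition tau (R : realType) (n r : nat) (a : 'I_n -> 'I_r -> R) (j : 'I_r) : nat :=
  #|[set i : 'I_n | (a i (ordS j) <= a i j)%R]|.

Definition zval (R : realType) (n r : nat) (a : 'I_n -> 'I_r -> R)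
    (k : 'I_r -> int) (j : 'I_r) : int :=
  k (ordS j) - ((tau a j)%:Z + k j + 2 - n%:Z).

(* A nonzero section of O(d) on P^1 has exactly d zeros counted with
   multiplicity, and any d distinct points are zeros of a nonzero section.
   Hence theta^j exists iff its tau_j required zeros fit into the degree
   k_(j+1) + n - 2 - k_j, i.e. iff z_j >= 0, and z_j then counts the extra
   zeros.  Summing, the k_j telescope: sum_j z_j = (n-2) r - sum_i cdesc(a_i),
   where cdesc counts cyclic descents.  Every position holding a value alpha is
   followed by a descent or by an up-crossing of the level alpha, and
   up-crossings are matched one-to-one with down-crossings, which are descents;
   so cdesc >= m(alpha).  Concatenating the increasing "layers" (layer k lists
   the values of multiplicity > k) attains max m(alpha), so a good arrangement
   has cdesc = max m(alpha) and sum_j z_j = delta.  Finally the k_j can be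
   chosen so that all z_j but the last vanish. *)

From HB Require Import structures.
From mathcomp Require Import all_boot all_order all_algebra all_field.
From mathcomp Require Import reals.
Import Order.TTheory GRing.Theory Num.Theory.
From mathcomp Require Import zify.

Set Implicit Arguments.
Unset Strict Implicit.
Unset Printing Implicit Defensive.

Lemma count_cyclic_crossings N (P : 'I_N -> bool) :
  \sum_(t < N) (~~ P t && P (ordS t)) = \sum_(t < N) (P t && ~~ P (ordS t)).
Proof.
have shift : \sum_(t < N) P t = \sum_(t < N) P (ordS t).
  exact: reindex_inj (@ordS_inj N).
have split_now : \sum_(t < N) P t =
    \sum_(t < N) (P t && P (ordS t)) + \sum_(t < N) (P t && ~~ P (ordS t)).
  by rewrite -big_split; apply: eq_bigr => t _; case: (P t); case: (P (ordS t)).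
have split_next : \sum_(t < N) P (ordS t) =
    \sum_(t < N) (P t && P (ordS t)) + \sum_(t < N) (~~ P t && P (ordS t)).
  by rewrite -big_split; apply: eq_bigr => t _; case: (P t); case: (P (ordS t)).
lia.
Qed.

Lemma sum_ltn_min m c : \sum_(i < m) (i < c) = minn m c.
Proof.
elim: m => [|m IHm]; first by rewrite big_ord0 min0n.
by rewrite big_ord_recr /= IHm; case: (ltnP m c) => /= ?; lia.
Qed.

Section CyclicDescents.
Variable R : realType.

Lemma card_eq_le_cyclic_descents {N} (f : 'I_N -> R) x :
  \sum_(t < N) (f t == x) <= \sum_(t < N) (f (ordS t) <= f t)%R.
Proof.
pose above t := (x < f t)%R.
apply: leq_trans (_ : \sum_(t < N) ((f t == x) && (f (ordS t) <= x)%R)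
                    + \sum_(t < N) (~~ above t && above (ordS t)) <= _).
  rewrite -big_split; apply: leq_sum => t _ /=; rewrite /above.
  by case: eqP => [->|] //=; rewrite ltxx /=; case: leP.
rewrite count_cyclic_crossings -big_split; apply: leq_sum => t _ /=.
rewrite /above -leNgt; case: eqP => [->|_] /=; first by rewrite ltxx addn0.
case: (ltP x (f t)) => //= xlt; case: (leP (f (ordS t)) x) => //= lex.
by rewrite (le_trans lex (ltW xlt)).
Qed.

Lemma count_mem_le_cdesc (s : seq R) x : count_mem x s <= cdesc s.
Proof.
have -> : count_mem x s = \sum_(t < size s) (nth 0%R s t == x).
  rewrite -sum1_count big_mkcond /= (big_nth 0%R) big_mkord.
  by apply: eq_bigr => t _; case: (_ == _).
exact: card_eq_le_cyclic_descents (fun t : 'I_(size s) => nth 0%R s t) x.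
Qed.

Lemma maxmult_le_cdesc (s : seq R) : maxmult s <= cdesc s.
Proof. by apply/bigmax_leqP_seq => x _ _; apply: count_mem_le_cdesc. Qed.

Lemma count_mem_le_maxmult (s : seq R) x :
  x \in s -> count_mem x s <= maxmult s.
Proof.
by move=> xs; apply: (@leq_bigmax_seq _ s xpredT (fun y => count_mem y s)).
Qed.

Fixpoint ldesc (s : seq R) : nat :=
  if s is x :: s' then
    if s' is y :: _ then (y <= x)%R + ldesc s' else 0
  else 0.

Lemma ldesc_cat s1 s2 : ldesc (s1 ++ s2) <= ldesc s1 + ldesc s2 + 1.
Proof.
elim: s1 => [|x s1 IHs1] /=; first by rewrite leq_addr.
case: s1 IHs1 => [|y s1] /= IHs1; last by lia.
by case: s2 IHs1 => [|z s2] //= _; rewrite addnC leq_add2l leq_b1.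
Qed.

Lemma ldesc_lt_sorted s : sorted <%R s -> ldesc s = 0.
Proof.
elim: s => [|x [|y s] IHs] //= /andP[xy ys].
by move: (IHs ys) => /= ->; rewrite addn0 leNgt xy.
Qed.

Lemma ldesc_flatten ss :
  all (fun s => ldesc s == 0) ss -> ldesc (flatten ss) <= (size ss).-1.
Proof.
elim: ss => [|s ss IHss] //= /andP[/eqP s0 ss0].
case: ss IHss ss0 => [|s' ss] IHss ss0 /=; first by rewrite cats0 s0.
by apply: leq_trans (ldesc_cat _ _) _; rewrite s0 addn1 ltnS; apply: IHss.
Qed.

Lemma cdesc_cons x s : cdesc (x :: s) = ldesc (x :: s) + (x <= last x s)%R.
Proof.
rewrite /cdesc /= big_ord_recr /= modnn; congr (_ + _); last first.
  by rewrite -[size s]/((size (x :: s)).-1) nth_last.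
under eq_bigr => t _ do rewrite modn_small ?ltnS //.
elim: s x => [|y s IHs] x; first by rewrite big_ord0.
by rewrite big_ord_recl IHs.
Qed.

Lemma cdesc_le_ldesc s : cdesc s <= ldesc s + 1.
Proof.
case: s => [|x s]; first by rewrite /cdesc big_ord0.
by rewrite cdesc_cons leq_add2l leq_b1.
Qed.

Definition layers (s : seq R) : seq (seq R) :=
  [seq [seq x <- sort <=%R (undup s) | k < count_mem x s]
  | k <- iota 0 (maxmult s)].

Lemma perm_flatten_layers s : perm_eq s (flatten (layers s)).
Proof.
apply/allP => x _; apply/eqP.
rewrite count_flatten -map_comp sumnE big_map.
rewrite -[maxmult s]subn0 -/(index_iota _ _) big_mkord.
under eq_bigr => k _ do
  rewrite /= count_uniq_mem ?filter_uniq ?sort_uniq ?undup_uniq // mem_filter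
    mem_sort mem_undup.
have [xs|xNs] := boolP (x \in s); last first.
  by rewrite big1 => [|k _]; [apply/count_memPn | rewrite andbF].
under eq_bigr => k _ do rewrite andbT.
rewrite sum_ltn_min; apply/esym/minn_idPr.
exact: count_mem_le_maxmult.
Qed.

Lemma cdesc_flatten_layers s : cdesc (flatten (layers s)) <= maxmult s.
Proof.
case: s => [|x s']; first by rewrite /layers /maxmult big_nil /cdesc big_ord0.
set s := x :: s'; apply: leq_trans (cdesc_le_ldesc _) _.
have mult_gt0 : 0 < maxmult s.
  by apply: leq_trans (count_mem_le_maxmult (mem_head x s')); rewrite /= eqxx.
have : ldesc (flatten (layers s)) <= (size (layers s)).-1.
  apply: ldesc_flatten; apply/allP => _ /mapP [k _ ->]; apply/eqP.
  apply/ldesc_lt_sorted/sorted_filter; first exact: lt_trans.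
  by rewrite sort_lt_sorted undup_uniq.
by rewrite size_map size_iota; lia.
Qed.

Lemma cdesc_good (s : seq R) : good s -> cdesc s = maxmult s.
Proof.
move=> s_good; apply/eqP; rewrite eqn_leq (maxmult_le_cdesc s) andbT.
exact: leq_trans (s_good _ (perm_flatten_layers s)) (cdesc_flatten_layers s).
Qed.

Lemma cdesc_arr r (s : 'I_r -> R) :
  cdesc (arr s) = \sum_(t < r) (s (ordS t) <= s t)%R.
Proof.
have size_arr : size (arr s) = r by rewrite size_map size_enum_ord.
have nth_arr (t : 'I_r) : nth 0%R (arr s) t = s t.
  by rewrite (nth_map t) ?size_enum_ord // nth_ord_enum.
rewrite /cdesc -(big_mkord xpredT (fun t =>
  (nth 0%R (arr s) (t.+1 %% size (arr s)) <= nth 0%R (arr s) t)%R : nat)).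
rewrite size_arr big_mkord; apply: eq_bigr => t _.
by rewrite -[(t.+1 %% r)%N]/(nat_of_ord (ordS t)) !nth_arr.
Qed.

End CyclicDescents.

Local Open Scope ring_scope.

Lemma section_divisor_exists (d : int) (p : {poly algC}) :
  p != 0 -> is_section d p ->
  exists D : seq P1, (forall x, count_mem x D = ordz d p x) /\ (size D)%:Z = d.
Proof.
move=> p0 p_sec; have [rs p_split] := closed_field_poly_normal p.
have size_p : size p = (size rs).+1.
  by rewrite p_split size_scale ?lead_coef_eq0 // size_prod_XsubC.
exists ([seq Some c | c <- rs] ++ nseq (absz (d - ((size p).-1)%:Z)) None).
split.
  case=> [c|] /=; rewrite count_cat count_nseq count_map /=; last first.
    by rewrite mul1n (@eq_count _ _ pred0) ?count_pred0.
  rewrite mul0n addn0 p_split -mul_polyC mupMr ?rootC ?lead_coef_eq0 //.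
  by rewrite mu_prod_XsubC; apply: eq_count.
have : (size p)%:Z <= d + 1 := p_sec.
rewrite size_cat size_map size_nseq size_p /= => size_le.
by rewrite PoszD gez0_abs; lia.
Qed.

Section VanishingSections.
Variables (n : nat) (Q : 'I_n -> P1).
Hypothesis Q_inj : injective Q.

Definition at_infinity : {set 'I_n} := [set i | Q i == None].

Definition affine_points (S : {set 'I_n}) : seq algC :=
  [seq oapp id 0 (Q i) | i <- enum (S :\: at_infinity)].

(* The point at infinity costs no linear factor: vanishing there only asks
   for degree < d. *)
Definition vanishing_poly (S : {set 'I_n}) : {poly algC} :=
  \prod_(c <- affine_points S) ('X - c%:P).

Lemma card_at_infinity_le1 (S : {set 'I_n}) : (#|S :&: at_infinity| <= 1)%N.
Proof.
apply/card_le1_eqP => i j /setIP[_] + /setIP[_].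
by rewrite !inE => /eqP Qi /eqP Qj; apply: Q_inj; rewrite Qi Qj.
Qed.

Lemma card_affine_points (S : {set 'I_n}) :
  #|S| = (#|S :&: at_infinity| + size (affine_points S))%N.
Proof. by rewrite size_map -cardE cardsID. Qed.

Lemma affine_pointsP (S : {set 'I_n}) c :
  reflect (exists2 i, i \in S & Q i = Some c) (c \in affine_points S).
Proof.
apply: (iffP mapP) => [[i] | [i iS Qi]]; last first.
  by exists i; rewrite ?Qi // mem_enum !inE Qi iS.
rewrite mem_enum !inE => /andP[Qi_aff iS].
by case Qi: (Q i) Qi_aff => [ci|] //= _ ->; exists i.
Qed.

Lemma affine_points_uniq (S : {set 'I_n}) : uniq (affine_points S).
Proof.
rewrite map_inj_in_uniq ?enum_uniq // => i j.
rewrite !mem_enum !inE => /andP[Qi_aff _] /andP[Qj_aff _].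
case Qi: (Q i) Qi_aff => [ci|] // _; case Qj: (Q j) Qj_aff => [cj|] // _ /= cij.
by apply: Q_inj; rewrite Qi Qj cij.
Qed.

Lemma card_le_of_vanishing (d : int) (S : {set 'I_n}) p :
  p != 0 -> is_section d p -> {in S, forall i, vanishes_at d p (Q i)} ->
  #|S|%:Z <= d.
Proof.
move=> p0 p_sec p_van.
have roots_lt : (size (affine_points S) < size p)%N.
  apply: max_poly_roots p0 _ (affine_points_uniq S).
  by apply/allP => c /affine_pointsP[i iS Qi]; have := p_van i iS; rewrite Qi.
have := card_at_infinity_le1 S; have : (size p)%:Z <= d + 1 := p_sec.
rewrite (card_affine_points S).
have [-> | [i]] := set_0Vmem (S :&: at_infinity).
  by rewrite cards0; lia.
rewrite !inE => /andP[iS /eqP Qi].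
have : (size p)%:Z <= d by have := p_van i iS; rewrite Qi.
lia.
Qed.

Lemma vanishing_poly_section (d : int) (S : {set 'I_n}) : #|S|%:Z <= d ->
  [/\ vanishing_poly S != 0, is_section d (vanishing_poly S)
    & {in S, forall i, vanishes_at d (vanishing_poly S) (Q i)}].
Proof.
rewrite card_affine_points => S_le.
have size_vp : size (vanishing_poly S) = (size (affine_points S)).+1.
  exact: size_prod_XsubC.
split; first by rewrite -size_poly_eq0 size_vp.
  by rewrite /is_section size_vp; lia.
move=> i iS; case Qi: (Q i) => [c|] /=.
  by rewrite root_prod_XsubC; apply/affine_pointsP; exists i.
have : (0 < #|S :&: at_infinity|)%N.
  by apply/card_gt0P; exists i; rewrite !inE iS Qi.
by rewrite size_vp; lia.
Qed.

Variable R : realType.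

Definition required_zeros (a a' : 'I_n -> R) : {set 'I_n} :=
  [set i | a' i <= a i].

Lemma zero_residue_card_le (k : int) (a : 'I_n -> R) (k' : int) (a' : 'I_n -> R)
    theta :
  theta != 0 -> zero_residue Q k a k' a' theta ->
  #|required_zeros a a'|%:Z <= k' + n%:Z - 2 - k.
Proof.
move=> theta0 [theta_sec theta_van].
apply: card_le_of_vanishing theta0 theta_sec _ => i.
by rewrite inE; apply: theta_van.
Qed.

Lemma vanishing_poly_zero_residue
    (k : int) (a : 'I_n -> R) (k' : int) (a' : 'I_n -> R) :
  #|required_zeros a a'|%:Z <= k' + n%:Z - 2 - k ->
  let theta := vanishing_poly (required_zeros a a') in
  theta != 0 /\ zero_residue Q k a k' a' theta.
Proof.
move=> /vanishing_poly_section[theta0 theta_sec theta_van].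
by split=> //; split=> // i le_a; apply: theta_van; rewrite inE.
Qed.

End VanishingSections.

Section ResidueDegrees.
Variables (R : realType) (n r : nat) (a : 'I_n -> 'I_r -> R).

Lemma tau_required_zeros j :
  tau a j = #|required_zeros (fun i => a i j) (fun i => a i (ordS j))|.
Proof. by []. Qed.

Lemma zvalE k j : zval a k j = (k (ordS j) + n%:Z - 2 - k j) - (tau a j)%:Z.
Proof. by rewrite /zval; lia. Qed.

Lemma sum_zval k :
  \sum_(j < r) zval a k j = (n%:Z - 2) * r%:Z - (\sum_(j < r) tau a j)%:Z.
Proof.
have shift : \sum_(j < r) k (ordS j) = \sum_(j < r) k j.
  by symmetry; apply: reindex_inj (@ordS_inj r).
rewrite (eq_bigr (fun j => (k (ordS j) - k j) + ((n%:Z - 2) - (tau a j)%:Z)));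
  last by move=> j _; rewrite zvalE; lia.
rewrite big_split /= sumrB shift subrr add0r sumrB sumr_const card_ord.
by rewrite (big_morph Posz PoszD (erefl _)) -[X in _ * X]natz mulr_natr.
Qed.

Hypothesis a_good : forall i, good (arr (a i)).

Lemma sum_tau_good :
  (\sum_(j < r) tau a j = \sum_(i < n) maxmult (arr (a i)))%N.
Proof.
under eq_bigr => j _ do rewrite /tau -sum1dep_card big_mkcond /=.
by rewrite exchange_big; apply: eq_bigr => i _; rewrite -cdesc_good ?cdesc_arr.
Qed.

Lemma sum_zval_defect k : \sum_(j < r) zval a k j = defect a.
Proof. by rewrite sum_zval sum_tau_good. Qed.

Lemma exists_zval_eq0_but_last :
  exists k : 'I_r -> int, forall j : 'I_r, (j.+1 < r)%N -> zval a k j = 0.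
Proof.
exists (fun j => \sum_(t < r | (t < j)%N) ((tau a t)%:Z + 2 - n%:Z)) => j j_lt.
rewrite /zval /= (modn_small j_lt) (bigD1 j) ?ltnSn //=.
rewrite (eq_bigl (fun t : 'I_r => (t < j)%N)) => [|t]; last first.
  by rewrite ltnS ltn_neqAle andbC.
by set K := \sum_(t < r | _) _; lia.
Qed.

Lemma defect_ge0_exists_zval_ge0 :
  0 <= defect a -> exists k : 'I_r -> int, forall j, 0 <= zval a k j.
Proof.
have [k k_eq0] := exists_zval_eq0_but_last.
rewrite -(sum_zval_defect k) => sum_ge0; exists k => j.
have [/k_eq0 -> // | j_last] := ltnP j.+1 r.
rewrite (bigD1 j) //= big1 ?addr0 // in sum_ge0 => t t_neq_j; apply: k_eq0.
have : nat_of_ord t != j by [].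
by have := ltn_ord j; have := ltn_ord t; lia.
Qed.

End ResidueDegrees.

Theorem lemma6p7 (R : realType) (n r : nat) (Q : 'I_n -> P1)
    (Q_inj : injective Q) (r_gt0 : (0 < r)%N)
    (a : 'I_n -> 'I_r -> R)
    (a_range : forall i t, 0 <= a i t < 1)
    (a_good : forall i, good (arr (a i))) :
  (forall k : 'I_r -> int,
     ((exists theta : 'I_r -> {poly algC},
         forall j : 'I_r, theta j != 0 /\
           zero_residue Q (k j) (fun i => a i j)
                          (k (ordS j)) (fun i => a i (ordS j)) (theta j))
      <-> (forall j, 0 <= zval a k j))
     /\ ((forall j, 0 <= zval a k j) ->
         forall (j : 'I_r) (th : {poly algC}), th != 0 ->
           zero_residue Q (k j) (fun i => a i j)
                          (k (ordS j)) (fun i => a i (ordS j)) th ->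
           exists D : seq P1,
             (forall x : P1, count_mem x D =
                 ordz (k (ordS j) + n%:Z - 2 - k j) th x)
             /\ (size D)%:Z = (tau a j)%:Z + zval a k j)
     /\ \sum_(j < r) zval a k j = defect a)
  /\ ((exists k : 'I_r -> int, forall j, 0 <= zval a k j) <-> 0 <= defect a).
Proof.
split=> [k|]; last split.
- split; [split | split; last exact: sum_zval_defect].
  + case=> theta theta_ok j; have [theta0 theta_res] := theta_ok j.
    rewrite zvalE subr_ge0 tau_required_zeros.
    by rewrite (zero_residue_card_le Q_inj theta0 theta_res).
  + move=> z_ge0; exists (fun j => vanishing_poly Q
      (required_zeros (fun i => a i j) (fun i => a i (ordS j)))) => j.
    apply: vanishing_poly_zero_residue.
    by rewrite -tau_required_zeros -subr_ge0 -zvalE.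
  + move=> _ j th th0 [th_sec _].
    have [D [D_count D_size]] := section_divisor_exists th0 th_sec.
    by exists D; split=> //; rewrite D_size zvalE subrKC.
- by case=> k z_ge0; rewrite -(sum_zval_defect a_good k); apply: sumr_ge0.
- exact: defect_ge0_exists_zval_ge0.
Qed.
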